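(* Let $R$ be a unital ring and let $(P,Q,\psi)$ be a unital $R$-system. Suppose that $(S,T,\sigma,B)$ is a semi-full covariant representation of $(P,Q,\psi)$, that $(P,Q,\psi)$ satisfies Condition (FS'), and that the ideal $I^{(k)}_{\psi,\sigma}$ of $B_0$ is unital (has a multiplicative identity) for every $k\ge0$. Then $B$ is epsilon-strongly $\mathbb{Z}$-graded.
   Context: For additive subsets $X,Y$ of a ring, $XY$ is the additive subgroup generated by products $xy$. For rings $A,B$, an $A$-$B$-bimodule $M$ is unital if there exist $a\in A,b\in B$ with $ax=x=xb$ for all $x\in M$. A $\mathbb{Z}$-graded ring $B=\bigoplus_iB_i$ is epsilon-strongly graded if each $B_i$ is a unital $B_iB_{-i}$-$B_{-i}B_i$-bimodule. An $R$-system is a triple $(P,Q,\psi)$ with $P,Q$ $R$-bimodules and $\psi:P\otimes_RQ\to R$ an $R$-bimodule homomorphism; it is unital if $R$ is unital and $1_R$ acts as identity on both sides of $P$ and $Q$. Put $P^{\otimes0}=Q^{\otimes0}=R$, $\psi_0(r\otimes r')=rr'$, $\psi_1=\psi$, and for $n>1$: $Q^{\otimes n}=Q^{\otimes(n-1)}\otimes_RQ$, $P^{\otimes n}=P\otimes_RP^{\otimes(n-1)}$, $\psi_n((p_1\otimes p_2)\otimes(q_2\otimes q_1))=\psi(p_1\psi_{n-1}(p_2\otimes q_2)\otimes q_1)$. A covariant representation is a tuple $(S,T,\sigma,B)$ with $B$ a ring, $S:P\to B$, $T:Q\to B$ additive maps, $\sigma:R\to B$ a ring homomorphism, with $S(pr)=S(p)\sigma(r)$,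 $S(rp)=\sigma(r)S(p)$, $T(qr)=T(q)\sigma(r)$, $T(rq)=\sigma(r)T(q)$, $\sigma(\psi(p\otimes q))=S(p)T(q)$. It is graded if $B$ is generated as a ring by $\sigma(R)\cup S(P)\cup T(Q)$ and $B$ carries a $\mathbb{Z}$-grading with $\sigma(R)\subseteq B_0$, $T(Q)\subseteq B_1$, $S(P)\subseteq B_{-1}$. For a graded covariant representation and $k\ge0$, $I^{(k)}_{\psi,\sigma}$ is the ideal of $B_0$ generated by $\{\sigma(\psi_k(p\otimes q)):p\in P^{\otimes k},q\in Q^{\otimes k}\}$; the (graded) representation is semi-full if $B_{-k}B_k=I^{(k)}_{\psi,\sigma}$ for all $k\ge0$. For $q\in Q,p\in P$ let $\theta_{q,p}(x)=q\psi(p\otimes x)$ ($x\in Q$) and $\theta_{p,q}(y)=\psi(y\otimes q)p$ ($y\in P$); $\mathcal{F}_P(Q)$, $\mathcal{F}_Q(P)$ are the additive groups generated by these maps. Condition (FS'): there exist $\Theta\in\mathcal{F}_P(Q)$, $\Phi\in\mathcal{F}_Q(P)$ with $\Theta(q)=q$ and $\Phi(p)=p$ for all $q\in Q,p\in P$. *)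

From HB Require Import structures.
From mathcomp Require Import all_boot all_order all_algebra.
Set Implicit Arguments. Unset Strict Implicit. Unset Printing Implicit Defensive.
Import GRing.Theory.
Local Open Scope ring_scope.

Definition is_bimodule (R : pzRingType) (M : zmodType)
  (l : R -> M -> M) (r : M -> R -> M) : Prop :=
  (forall a x y, l a (x + y) = l a x + l a y) /\
  (forall a b x, l (a + b) x = l a x + l b x) /\
  (forall a b x, l (a * b) x = l a (l b x)) /\
  (forall x y a, r (x + y) a = r x a + r y a) /\
  (forall x a b, r x (a + b) = r x a + r x b) /\
  (forall x a b, r x (a * b) = r (r x a) b) /\
  (forall a x b, r (l a x) b = l a (r x b)).

Definition unital_bimodule (R : pzRingType) (M : zmodType)
  (l : R -> M -> M) (r : M -> R -> M) : Prop :=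
  forall x, l 1 x = x /\ r x 1 = x.

(* psi : P (x)_R Q -> R, an R-bimodule homomorphism, given through the
   universal property: an R-balanced biadditive map that is R-bilinear on
   the outer sides. *)
Definition is_Rsystem_map (R : pzRingType) (P Q : zmodType)
  (lP : R -> P -> P) (rP : P -> R -> P) (lQ : R -> Q -> Q) (rQ : Q -> R -> Q)
  (psi : P -> Q -> R) : Prop :=
  [/\ (forall p p' q, psi (p + p') q = psi p q + psi p' q),
      (forall p q q', psi p (q + q') = psi p q + psi p q'),
      (forall p a q, psi (rP p a) q = psi p (lQ a q)),
      (forall a p q, psi (lP a p) q = a * psi p q) &
      (forall p q a, psi p (rQ q a) = psi p q * a)].

Definition unital_Rsystem (R : pzRingType) (P Q : zmodType)
  (lP : R -> P -> P) (rP : P -> R -> P) (lQ : R -> Q -> Q) (rQ : Q -> R -> Q)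
  (psi : P -> Q -> R) : Prop :=
  [/\ is_bimodule lP rP, is_bimodule lQ rQ, is_Rsystem_map lP rP lQ rQ psi,
      unital_bimodule lP rP & unital_bimodule lQ rQ].

(* psi_n on simple tensors.  ps = [:: p1; p2; ...; pn] stands for
   p1 (x) p2 (x) ... (x) pn in P^{(x)n} = P (x) P^{(x)(n-1)}, and
   qs = [:: q1; q2; ...; qn] stands for qn (x) ... (x) q2 (x) q1 in
   Q^{(x)n} = Q^{(x)(n-1)} (x) Q, so that
   psi_n((p1 (x) p2) (x) (q2 (x) q1)) = psi(p1 psi_{n-1}(p2 (x) q2) (x) q1). *)
Fixpoint psiN (R : pzRingType) (P Q : zmodType) (rP : P -> R -> P)
  (psi : P -> Q -> R) (ps : seq P) (qs : seq Q) {struct ps} : R :=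
  match ps, qs with
  | [:: p], [:: q] => psi p q
  | p :: ps', q :: qs' => psi (rP p (psiN rP psi ps' qs')) q
  | _, _ => 0
  end.

Inductive addgen (B : pzRingType) (G : B -> Prop) : B -> Prop :=
  | addgen_in x : G x -> addgen G x
  | addgen0 : addgen G 0
  | addgenB x y : addgen G x -> addgen G y -> addgen G (x - y).

Definition prodset (B : pzRingType) (X Y : B -> Prop) : B -> Prop :=
  addgen (fun b => exists x y, [/\ X x, Y y & b = x * y]).

Inductive ringgen (B : pzRingType) (G : B -> Prop) : B -> Prop :=
  | ringgen_in x : G x -> ringgen G x
  | ringgen0 : ringgen G 0
  | ringgenB x y : ringgen G x -> ringgen G y -> ringgen G (x - y)
  | ringgenM x y : ringgen G x -> ringgen G y -> ringgen G (x * y).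

Inductive idealgen (B : pzRingType) (A G : B -> Prop) : B -> Prop :=
  | idealgen_in x : G x -> idealgen A G x
  | idealgen0 : idealgen A G 0
  | idealgenB x y : idealgen A G x -> idealgen A G y -> idealgen A G (x - y)
  | idealgenMl a x : A a -> idealgen A G x -> idealgen A G (a * x)
  | idealgenMr x a : A a -> idealgen A G x -> idealgen A G (x * a).

Definition Zgrading (B : pzRingType) (Bg : int -> B -> Prop) : Prop :=
  [/\ (forall i, Bg i 0 /\ (forall x y, Bg i x -> Bg i y -> Bg i (x - y))),
      (forall i j x y, Bg i x -> Bg j y -> Bg (i + j) (x * y)),
      (forall b : B, exists (s : seq int) (x : int -> B),
          [/\ uniq s, (forall i, Bg i (x i)) & b = \sum_(i <- s) x i]) &
      (forall (s : seq int) (x : int -> B), uniq s -> (forall i, Bg i (x i)) ->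
          \sum_(i <- s) x i = 0 -> forall i, i \in s -> x i = 0)].

Definition unital_in_bimodule (B : pzRingType) (A C M : B -> Prop) : Prop :=
  exists a c, [/\ A a, C c & forall x, M x -> a * x = x /\ x * c = x].

Definition epsilon_strongly_graded (B : pzRingType) (Bg : int -> B -> Prop) : Prop :=
  Zgrading Bg /\
  forall i : int, unital_in_bimodule (prodset (Bg i) (Bg (- i)))
                                     (prodset (Bg (- i)) (Bg i)) (Bg i).

Definition covariant_rep (R : pzRingType) (P Q : zmodType)
  (lP : R -> P -> P) (rP : P -> R -> P) (lQ : R -> Q -> Q) (rQ : Q -> R -> Q)
  (psi : P -> Q -> R) (B : pzRingType)
  (S : P -> B) (T : Q -> B) (sigma : R -> B) : Prop :=
  (forall p p', S (p + p') = S p + S p') /\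
  (forall q q', T (q + q') = T q + T q') /\
  (forall a b, sigma (a + b) = sigma a + sigma b) /\
  (forall a b, sigma (a * b) = sigma a * sigma b) /\
  (forall p a, S (rP p a) = S p * sigma a /\ S (lP a p) = sigma a * S p) /\
  (forall q a, T (rQ q a) = T q * sigma a /\ T (lQ a q) = sigma a * T q) /\
  (forall p q, sigma (psi p q) = S p * T q).

Definition graded_rep (R : pzRingType) (P Q : zmodType) (B : pzRingType)
  (S : P -> B) (T : Q -> B) (sigma : R -> B) (Bg : int -> B -> Prop) : Prop :=
  [/\ (forall b, ringgen (fun x => (exists r, x = sigma r) \/ (exists p, x = S p)
                                   \/ (exists q, x = T q)) b),
      Zgrading Bg,
      (forall r, Bg 0 (sigma r)),
      (forall q, Bg 1 (T q)) &
      (forall p, Bg (-1) (S p))].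

(* generators of I^(k)_{psi,sigma} (on simple tensors; P^(x)0 = Q^(x)0 = R) *)
Definition Igen (R : pzRingType) (P Q : zmodType) (rP : P -> R -> P)
  (psi : P -> Q -> R) (B : pzRingType) (sigma : R -> B) (k : nat) : B -> Prop :=
  fun b => if k is 0 then exists r r' : R, b = sigma (r * r')
           else exists (ps : seq P) (qs : seq Q),
                  [/\ size ps = k, size qs = k & b = sigma (psiN rP psi ps qs)].

Definition Iideal (R : pzRingType) (P Q : zmodType) (rP : P -> R -> P)
  (psi : P -> Q -> R) (B : pzRingType) (sigma : R -> B) (Bg : int -> B -> Prop)
  (k : nat) : B -> Prop :=
  idealgen (Bg 0) (Igen rP psi sigma k).

Definition semi_full (R : pzRingType) (P Q : zmodType) (rP : P -> R -> P)
  (psi : P -> Q -> R) (B : pzRingType) (sigma : R -> B) (Bg : int -> B -> Prop) : Prop :=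
  forall (k : nat) (b : B),
    prodset (Bg (- (k%:Z))) (Bg k%:Z) b <-> Iideal rP psi sigma Bg k b.

Definition unital_subset (B : pzRingType) (I : B -> Prop) : Prop :=
  exists e, I e /\ forall x, I x -> e * x = x /\ x * e = x.

Definition condition_FS' (R : pzRingType) (P Q : zmodType)
  (lP : R -> P -> P) (rQ : Q -> R -> Q) (psi : P -> Q -> R) : Prop :=
  (exists Theta : seq (int * Q * P),
      forall x : Q, \sum_(t <- Theta) (rQ t.1.2 (psi t.2 x) *~ t.1.1) = x) /\
  (exists Phi : seq (int * P * Q),
      forall y : P, \sum_(t <- Phi) (lP (psi y t.2) t.1.2 *~ t.1.1) = y).

(* Every element of B is a sum of monomials T(q_1)..T(q_n) sigma(r) S(p_1)..S(p_m)
   of degree n - m, so by uniqueness of homogeneous decompositions an element of B_k,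
   k >= 0, is a sum of such monomials with n >= k.  Writing Theta = sum_t n_t theta_{q_t,p_t},
   we get sum_t n_t T(q_t) sigma(psi(p_t, x)) = T(Theta x) = T x, hence the iterates
   a_0 = 1, a_(k+1) = sum_t n_t T(q_t) a_k S(p_t) lie in B_k B_(-k) and are left identities
   on B_k.  Semi-fullness identifies B_(-k) B_k with the unital ideal I^(k); its identity e
   is a right identity on B_k because x e = a_k x e and a_k x lies in B_k (B_(-k) B_k).
   Negative degrees are symmetric, with Phi in place of Theta. *)

From HB Require Import structures.
From mathcomp Require Import all_boot all_order all_algebra.
Set Implicit Arguments. Unset Strict Implicit. Unset Printing Implicit Defensive.
Import GRing.Theory.
Local Open Scope ring_scope.

Section AdditiveSubgroups.
Variable B : pzRingType.
Implicit Types (G X Y : B -> Prop) (x y z : B).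

Lemma addgenN G x : addgen G x -> addgen G (- x).
Proof. by move=> Gx; rewrite -sub0r; apply: addgenB => //; apply: addgen0. Qed.

Lemma addgenD G x y : addgen G x -> addgen G y -> addgen G (x + y).
Proof. by move=> Gx Gy; rewrite -[y]opprK; apply/addgenB/addgenN. Qed.

Lemma addgen_sum G (I : Type) (r : seq I) (P : pred I) (F : I -> B) :
  (forall i, P i -> addgen G (F i)) -> addgen G (\sum_(i <- r | P i) F i).
Proof. by move=> GF; apply: big_ind => //; [apply: addgen0 | apply: addgenD]. Qed.

Lemma addgenMz G x n : addgen G x -> addgen G (x *~ n).
Proof.
move=> Gx; have GMn m : addgen G (x *+ m).
  by elim: m => [|m IHm]; [rewrite mulr0n; apply: addgen0 | rewrite mulrS; apply: addgenD].
by case: n => m; rewrite ?NegzE ?mulrNz -pmulrn //; apply: addgenN.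
Qed.

Lemma prodset_mul2 X Y X' Y' a c z :
  (forall x, X x -> X' (a * x)) -> (forall y, Y y -> Y' (y * c)) ->
  prodset X Y z -> prodset X' Y' (a * z * c).
Proof.
move=> aX Yc; elim=> [_ [x [y [Xx Yy ->]]]| |u v _ IHu _ IHv].
- by apply: addgen_in; exists (a * x), (y * c); rewrite !mulrA; split; auto.
- by rewrite mulr0 mul0r; apply: addgen0.
- by rewrite mulrBr mulrBl; apply: addgenB.
Qed.

Lemma unital_in_bimodule_of_left_unit X Y a :
  prodset X Y a -> (forall x, X x -> a * x = x) -> unital_subset (prodset Y X) ->
  unital_in_bimodule (prodset X Y) (prodset Y X) X.
Proof.
move=> XYa aK [e [YXe eK]]; exists a, e; split=> // x Xx; split; first exact: aK.
rewrite -(aK x Xx); elim: XYa => [_ [u [v [_ Yv ->]]]| |u v _ IHu _ IHv].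
- by rewrite -!mulrA [v * _]mulrA (eK (v * x) _).2 //; apply: addgen_in; exists v, x.
- by rewrite !mul0r.
- by rewrite !mulrBl IHu IHv.
Qed.

Lemma unital_in_bimodule_of_right_unit X Y c :
  prodset Y X c -> (forall x, X x -> x * c = x) -> unital_subset (prodset X Y) ->
  unital_in_bimodule (prodset X Y) (prodset Y X) X.
Proof.
move=> YXc cK [e [XYe eK]]; exists e, c; split=> // x Xx; split; last exact: cK.
rewrite -(cK x Xx); elim: YXc => [_ [u [v [Yu _ ->]]]| |u v _ IHu _ IHv].
- by rewrite !mulrA -[e * x * u]mulrA (eK (x * u) _).1 //; apply: addgen_in; exists x, u.
- by rewrite !mulr0.
- by rewrite !mulrBr IHu IHv.
Qed.

End AdditiveSubgroups.

Lemma sumr_pred1_uniq (V : zmodType) (I : eqType) (s : seq I) (i : I) (x : V) :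
  uniq s -> i \in s -> \sum_(j <- s | j == i) x = x.
Proof.
by move=> us si; rewrite big_const_seq [count _ _](count_uniq_mem i us) si /= addr0.
Qed.

Fixpoint sandwich_iter (B : pzRingType) (Th : seq (int * B * B)) (k : nat) : B :=
  if k is k'.+1 then \sum_(t <- Th) (t.1.2 * sandwich_iter Th k' * t.2) *~ t.1.1
  else 1.

Section ZGrading.
Variables (B : pzRingType) (Bg : int -> B -> Prop).
Hypothesis gradedB : Zgrading Bg.

Lemma Zgrading0 i : Bg i 0.
Proof. by have [/(_ i)[]] := gradedB. Qed.

Lemma ZgradingB i x y : Bg i x -> Bg i y -> Bg i (x - y).
Proof. by case: gradedB => /(_ i)[_ BgB] *; apply: BgB. Qed.

Lemma ZgradingM i j x y : Bg i x -> Bg j y -> Bg (i + j) (x * y).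
Proof. by case: gradedB => _ BgM *; apply: BgM. Qed.

Lemma Zgrading_sum i (I : Type) (r : seq I) (P : pred I) (F : I -> B) :
  (forall k, P k -> Bg i (F k)) -> Bg i (\sum_(k <- r | P k) F k).
Proof.
move=> BgF; apply: big_ind => //; first exact: Zgrading0.
move=> x y Bx By; rewrite -[y]opprK; apply: ZgradingB => //.
by rewrite -sub0r; apply: ZgradingB => //; apply: Zgrading0.
Qed.

Lemma Zgrading_prod (I : Type) (r : seq I) (F : I -> B) i :
  Bg 0 1 -> (forall k, Bg i (F k)) -> Bg ((size r)%:Z * i) (\prod_(k <- r) F k).
Proof.
move=> Bg1 BgF; elim: r => [|k r IHr]; first by rewrite big_nil mul0r.
by rewrite big_cons /= intS mulrDl mul1r; apply: ZgradingM.
Qed.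

Lemma Zgrading_component (L : seq (int * B)) d x :
  (forall t, t \in L -> Bg t.1 t.2) -> Bg d x -> x = \sum_(t <- L) t.2 ->
  x = \sum_(t <- L | t.1 == d) t.2.
Proof.
move=> BgL Bgx xE; pose s := undup (d :: map fst L).
have us : uniq s := undup_uniq _.
pose z e := \sum_(t <- L | t.1 == e) t.2 - (if e == d then x else 0).
have Bgz e : Bg e (z e).
  apply: ZgradingB.
    by rewrite big_seq_cond; apply: Zgrading_sum => t /andP[/BgL + /eqP <-].
  by case: eqP => [->|_]; [exact: Bgx | exact: Zgrading0].
have sum_z : \sum_(e <- s) z e = 0.
  rewrite sumrB -big_mkcond sumr_pred1_uniq ?mem_undup ?mem_head //.
  rewrite (exchange_big_dep xpredT) //= xE; apply/eqP; rewrite subr_eq0.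
  apply/eqP/eq_big_seq => t tL.
  rewrite (eq_bigl (pred1 t.1)) => [|e]; last exact: eq_sym.
  by rewrite sumr_pred1_uniq // mem_undup in_cons map_f ?orbT.
case: gradedB => _ _ _ /(_ s z us Bgz sum_z d).
by rewrite mem_undup mem_head /z eqxx => /(_ isT) /eqP; rewrite subr_eq0 => /eqP.
Qed.

Lemma sandwich_iter_prodset (Th : seq (int * B * B)) (k : nat) :
  Bg 0 1 -> (forall t, t \in Th -> Bg 1 t.1.2 /\ Bg (-1) t.2) ->
  prodset (Bg k) (Bg (- k%:Z)) (sandwich_iter Th k).
Proof.
move=> Bg1 BgTh; elim: k => [|k IHk] /=.
  by apply: addgen_in; exists 1, 1; rewrite mulr1.
rewrite big_seq; apply: addgen_sum => t /BgTh[Bgl Bgr]; apply: addgenMz.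
apply: prodset_mul2 IHk => [x Bx|y By]; first by rewrite intS; apply: ZgradingM.
by rewrite intS opprD addrC; apply: ZgradingM.
Qed.

End ZGrading.

Lemma morph_add0 (U V : zmodType) (f : U -> V) : {morph f : x y / x + y} -> f 0 = 0.
Proof. by move=> fD; apply: (@addrI _ (f 0)); rewrite -fD !addr0. Qed.

Section CovariantRepresentation.
Variables (R : pzRingType) (P Q : zmodType).
Variables (lP : R -> P -> P) (rP : P -> R -> P) (lQ : R -> Q -> Q) (rQ : Q -> R -> Q).
Variable psi : P -> Q -> R.
Variables (B : pzRingType) (S : P -> B) (T : Q -> B) (sigma : R -> B).
Variable Bg : int -> B -> Prop.
Hypotheses (unitalP : unital_bimodule lP rP) (unitalQ : unital_bimodule lQ rQ).
Hypothesis repB : covariant_rep lP rP lQ rQ psi S T sigma.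
Hypothesis gradedB : graded_rep S T sigma Bg.

Let SD : {morph S : x y / x + y}. Proof. by case: repB. Qed.
Let TD : {morph T : x y / x + y}. Proof. by case: repB => _ []. Qed.
Let sigmaD : {morph sigma : x y / x + y}. Proof. by case: repB => _ [_ []]. Qed.
Let sigmaM : {morph sigma : x y / x * y}. Proof. by case: repB => _ [_ [_ []]]. Qed.
Let S_rP p a : S (rP p a) = S p * sigma a.
Proof. by case: repB => _ [_ [_ [_ [/(_ p a)[]]]]]. Qed.
Let S_lP a p : S (lP a p) = sigma a * S p.
Proof. by case: repB => _ [_ [_ [_ [/(_ p a)[]]]]]. Qed.
Let T_rQ q a : T (rQ q a) = T q * sigma a.
Proof. by case: repB => _ [_ [_ [_ [_ [/(_ q a)[]]]]]]. Qed.
Let T_lQ a q : T (lQ a q) = sigma a * T q.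
Proof. by case: repB => _ [_ [_ [_ [_ [/(_ q a)[]]]]]]. Qed.
Let sigma_psi p q : sigma (psi p q) = S p * T q.
Proof. by case: repB => _ [_ [_ [_ [_ [_ ->]]]]]. Qed.

#[local] HB.instance Definition _ :=
  GRing.isNmodMorphism.Build P B S (conj (morph_add0 SD) SD).
#[local] HB.instance Definition _ :=
  GRing.isNmodMorphism.Build Q B T (conj (morph_add0 TD) TD).
#[local] HB.instance Definition _ :=
  GRing.isNmodMorphism.Build R B sigma (conj (morph_add0 sigmaD) sigmaD).

Let Zgraded : Zgrading Bg. Proof. by case: gradedB. Qed.
Let Bg_sigma r : Bg 0 (sigma r). Proof. by case: gradedB. Qed.
Let Bg_T q : Bg 1 (T q). Proof. by case: gradedB. Qed.
Let Bg_S p : Bg (-1) (S p). Proof. by case: gradedB. Qed.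

Lemma sigma1 : sigma 1 = 1.
Proof.
have sigma1M b : sigma 1 * b = b.
  case: gradedB => /(_ b) + _ _ _ _.
  elim=> {b} [_ [[r ->]|[[p ->]|[q ->]]]| |x y _ IHx _ IHy|x y _ IHx _ IHy].
  - by rewrite -sigmaM mul1r.
  - by rewrite -S_lP (unitalP p).1.
  - by rewrite -T_lQ (unitalQ q).1.
  - by rewrite mulr0.
  - by rewrite mulrBr IHx IHy.
  - by rewrite mulrA IHx.
by rewrite -[LHS]mulr1 sigma1M.
Qed.

Let Bg1 : Bg 0 1. Proof. by rewrite -sigma1. Qed.

Definition monomial (d : int) (w : B) : Prop :=
  exists (qs : seq Q) (r : R) (ps : seq P),
    w = \prod_(q <- qs) T q * sigma r * \prod_(p <- ps) S p /\
    d = (size qs)%:Z - (size ps)%:Z.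

Lemma monomialN d w : monomial d w -> monomial d (- w).
Proof.
by case=> qs [r [ps [-> ->]]]; exists qs, (- r), ps; rewrite raddfN mulrN mulNr.
Qed.

Lemma monomialM_sigma d w r : monomial d w -> monomial d (w * sigma r).
Proof.
case=> qs [r0 [ps [-> ->]]]; case/lastP: ps => [|ps p].
  by exists qs, (r0 * r), [::]; rewrite !big_nil !mulr1 sigmaM mulrA.
exists qs, r0, (rcons ps (rP p r)); rewrite !size_rcons !big_rcons /=.
by rewrite S_rP !mulrA.
Qed.

Lemma monomialM_S d w p : monomial d w -> monomial (d - 1) (w * S p).
Proof.
case=> qs [r [ps [-> ->]]]; exists qs, r, (rcons ps p).
by rewrite big_rcons /= mulrA size_rcons -addn1 PoszD opprD addrA.
Qed.

Lemma monomialM_T d w q : monomial d w -> monomial (d + 1) (w * T q).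
Proof.
case=> qs [r [ps [-> ->]]]; case/lastP: ps => [|ps p].
  exists (rcons qs (lQ r q)), 1, [::].
  by rewrite big_rcons /= T_lQ sigma1 !big_nil !mulr1 mulrA size_rcons -addn1 PoszD !subr0.
have m : monomial ((size qs)%:Z - (size ps)%:Z)
    (\prod_(q <- qs) T q * sigma r * \prod_(p <- ps) S p) by exists qs, r, ps.
move: (monomialM_sigma (psi p q) m); rewrite sigma_psi !mulrA.
by rewrite big_rcons /= mulrA size_rcons -addn1 PoszD opprD addrA subrK.
Qed.

Lemma monomial_homogeneous d w : monomial d w -> Bg d w.
Proof.
case=> qs [r [ps [-> ->]]].
have := ZgradingM Zgraded (ZgradingM Zgraded (Zgrading_prod Zgraded qs Bg1 Bg_T) (Bg_sigma r))
  (Zgrading_prod Zgraded ps Bg1 Bg_S).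
by rewrite mulr1 addr0 mulrN1.
Qed.

Definition monomial_sum (b : B) : Prop :=
  exists L : seq (int * B),
    (forall t, t \in L -> monomial t.1 t.2) /\ b = \sum_(t <- L) t.2.

Lemma monomial_sumB x y : monomial_sum x -> monomial_sum y -> monomial_sum (x - y).
Proof.
move=> [L1 [mL1 ->]] [L2 [mL2 ->]]; exists (L1 ++ [seq (t.1, - t.2) | t <- L2]); split.
  by move=> t; rewrite mem_cat => /orP[/mL1 //|/mapP[u /mL2 mu ->]]; apply: monomialN.
by rewrite big_cat big_map sumrN.
Qed.

Lemma monomial_sumMr_shift b g e :
  (forall d w, monomial d w -> monomial (d + e) (w * g)) ->
  monomial_sum b -> monomial_sum (b * g).
Proof.
move=> mg [L [mL ->]]; exists [seq (t.1 + e, t.2 * g) | t <- L]; split.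
  by move=> _ /mapP[t /mL mt ->]; apply: mg.
by rewrite big_map mulr_suml.
Qed.

Lemma monomial_sumMr b g : monomial_sum b -> monomial_sum (b * g).
Proof.
case: gradedB => /(_ g) gen_g _ _ _ _; elim: gen_g b => {g}.
- move=> _ [[r ->]|[[p ->]|[q ->]]] b.
  + by apply: (monomial_sumMr_shift (e := 0)) => d w; rewrite addr0; apply: monomialM_sigma.
  + by apply: monomial_sumMr_shift => d w; apply: monomialM_S.
  + by apply: monomial_sumMr_shift => d w; apply: monomialM_T.
- by move=> b _; rewrite mulr0; exists [::]; rewrite big_nil.
- by move=> x y _ mx _ my b mb; rewrite mulrBr; apply: monomial_sumB; [apply: mx | apply: my].
- by move=> x y _ mx _ my b mb; rewrite mulrA; apply/my/mx.
Qed.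

Lemma monomial_sum_all b : monomial_sum b.
Proof.
rewrite -[b]mul1r; apply: monomial_sumMr; exists [:: (0, 1)]; split; last by rewrite big_seq1.
by move=> t; rewrite inE => /eqP -> /=; exists [::], 1, [::]; rewrite sigma1 !big_nil !mulr1.
Qed.

Lemma homogeneous_monomial_sum d x :
  Bg d x -> exists ws : seq B, {in ws, forall w, monomial d w} /\ x = \sum_(w <- ws) w.
Proof.
move=> Bgx; have [L [mL xE]] := monomial_sum_all x.
exists [seq t.2 | t <- L & t.1 == d]; split.
  by move=> _ /mapP[t + ->]; rewrite mem_filter => /andP[/eqP <- /mL].
rewrite big_map big_filter; apply: Zgrading_component Bgx xE => //.
by move=> t /mL; apply: monomial_homogeneous.
Qed.

Lemma monomial_nat_split (k : nat) w :
  monomial k w -> exists qs y, size qs = k /\ w = \prod_(q <- qs) T q * y.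
Proof.
case=> qs [r [ps [-> dE]]].
have sizeE : (k + size ps)%N = size qs by apply/eqP; rewrite -eqz_nat PoszD dE subrK.
exists (take k qs), (\prod_(q <- drop k qs) T q * sigma r * \prod_(p <- ps) S p).
by rewrite size_takel -?sizeE ?leq_addr // !mulrA -big_cat cat_take_drop.
Qed.

Lemma monomial_neg_split (k : nat) w :
  monomial (- k%:Z) w -> exists y ps, size ps = k /\ w = y * \prod_(p <- ps) S p.
Proof.
case=> qs [r [ps [-> dE]]].
have sizeE : (size qs + k)%N = size ps.
  by apply/eqP; rewrite -eqz_nat PoszD -[k%:Z]opprK dE opprB addrC subrK.
exists (\prod_(q <- qs) T q * sigma r * \prod_(p <- take (size ps - k) ps) S p).
exists (drop (size ps - k) ps).
split; first by rewrite size_drop subKn // -sizeE leq_addl.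
by rewrite -[RHS]mulrA -big_cat cat_take_drop.
Qed.

Section LeftUnits.
Variable Theta : seq (int * Q * P).
Hypothesis ThetaK : forall x, \sum_(t <- Theta) (rQ t.1.2 (psi t.2 x) *~ t.1.1) = x.

Let theta_iter k := sandwich_iter [seq (t.1.1, T t.1.2, S t.2) | t <- Theta] k.

Lemma theta_iter_prodT qs r :
  theta_iter (size qs) * (sigma r * \prod_(q <- qs) T q) = sigma r * \prod_(q <- qs) T q.
Proof.
elim: qs r => [|q qs IHqs] r; first by rewrite /= mul1r.
rewrite big_cons !(mulrA (sigma r)) -T_lQ; set q' := lQ r q.
rewrite /theta_iter /= big_map mulr_suml.
transitivity (\sum_(t <- Theta) T (rQ t.1.2 (psi t.2 q') *~ t.1.1) * \prod_(q <- qs) T q).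
  apply: eq_bigr => t _ /=; rewrite raddfMz /= !mulrzAl; congr (_ *~ _).
  by rewrite T_rQ -!mulrA [S _ * _]mulrA -sigma_psi IHqs.
by rewrite -mulr_suml -raddf_sum ThetaK.
Qed.

Lemma theta_iter_mull (k : nat) x : Bg k x -> theta_iter k * x = x.
Proof.
move=> /homogeneous_monomial_sum[ws [mws ->]]; rewrite mulr_sumr.
apply: eq_big_seq => _ /mws /monomial_nat_split[qs [y [<- ->]]].
by have := theta_iter_prodT qs 1; rewrite sigma1 !mul1r mulrA => ->.
Qed.

Lemma unital_component_nat (k : nat) :
  unital_subset (prodset (Bg (- k%:Z)) (Bg k)) ->
  unital_in_bimodule (prodset (Bg k) (Bg (- k%:Z))) (prodset (Bg (- k%:Z)) (Bg k)) (Bg k).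
Proof.
apply: unital_in_bimodule_of_left_unit (theta_iter_mull (k := k)).
by apply: sandwich_iter_prodset => // _ /mapP[t _ ->]; split; [apply: Bg_T | apply: Bg_S].
Qed.

End LeftUnits.

Section RightUnits.
Variable Phi : seq (int * P * Q).
Hypothesis PhiK : forall y, \sum_(t <- Phi) (lP (psi y t.2) t.1.2 *~ t.1.1) = y.

Let phi_iter k := sandwich_iter [seq (t.1.1, T t.2, S t.1.2) | t <- Phi] k.

Lemma phi_iter_prodS ps r :
  \prod_(p <- ps) S p * sigma r * phi_iter (size ps) = \prod_(p <- ps) S p * sigma r.
Proof.
elim/last_ind: ps r => [|ps p IHps] r; first by rewrite /= mulr1.
rewrite big_rcons -!(mulrA _ (S p)) -S_rP size_rcons; set p' := rP p r.
rewrite /phi_iter /= big_map mulr_sumr.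
transitivity (\sum_(t <- Phi) \prod_(p <- ps) S p * S (lP (psi p' t.2) t.1.2 *~ t.1.1)).
  apply: eq_bigr => t _ /=; rewrite raddfMz /= !mulrzAr; congr (_ *~ _).
  by rewrite S_lP !mulrA -[_ * S p' * _]mulrA -sigma_psi IHps.
by rewrite -mulr_sumr -raddf_sum PhiK.
Qed.

Lemma phi_iter_mulr k x : Bg (- k%:Z) x -> x * phi_iter k = x.
Proof.
move=> /homogeneous_monomial_sum[ws [mws ->]]; rewrite mulr_suml.
apply: eq_big_seq => _ /mws /monomial_neg_split[y [ps [<- ->]]].
by have := phi_iter_prodS ps 1; rewrite sigma1 !mulr1 -mulrA => ->.
Qed.

Lemma unital_component_neg (k : nat) :
  unital_subset (prodset (Bg (- k%:Z)) (Bg k)) ->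
  unital_in_bimodule (prodset (Bg (- k%:Z)) (Bg k)) (prodset (Bg k) (Bg (- k%:Z)))
    (Bg (- k%:Z)).
Proof.
apply: unital_in_bimodule_of_right_unit (phi_iter_mulr (k := k)).
by apply: sandwich_iter_prodset => // _ /mapP[t _ ->]; split; [apply: Bg_T | apply: Bg_S].
Qed.

End RightUnits.

End CovariantRepresentation.

Theorem mainTheorem9 (R : pzRingType) (P Q : zmodType)
  (lP : R -> P -> P) (rP : P -> R -> P) (lQ : R -> Q -> Q) (rQ : Q -> R -> Q)
  (psi : P -> Q -> R)
  (B : pzRingType) (S : P -> B) (T : Q -> B) (sigma : R -> B)
  (Bg : int -> B -> Prop) :
  unital_Rsystem lP rP lQ rQ psi ->
  covariant_rep lP rP lQ rQ psi S T sigma ->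
  graded_rep S T sigma Bg ->
  semi_full rP psi sigma Bg ->
  condition_FS' lP rQ psi ->
  (forall k : nat, unital_subset (Iideal rP psi sigma Bg k)) ->
  epsilon_strongly_graded Bg.
Proof.
move=> [_ _ _ unitalP unitalQ] repB gradedB semifull [[Theta ThetaK] [Phi PhiK]] unitalI.
have unitalB (k : nat) : unital_subset (prodset (Bg (- k%:Z)) (Bg k)).
  have [e [Ie eK]] := unitalI k; exists e; split; first exact/(semifull k e).2.
  by move=> x /(semifull k x).1; apply: eK.
split; first by case: gradedB.
case=> [k|m].
  exact: (unital_component_nat unitalP unitalQ repB gradedB ThetaK (unitalB k)).
rewrite NegzE opprK.
exact: (unital_component_neg unitalP unitalQ repB gradedB PhiK (unitalB _)).
Qed.
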